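(* Let $b>0$, $m\ge 0$ with $b^2>4m$, $\alpha>0$, $\lambda\in\mathbb{R}\setminus\{0\}$, $k\in\mathbb{N}_0^n$, and $\mu_k=2|k|+n$. Let $a_0,a_1\in\mathbb{C}$ and let $w(t)$ solve $$w''(t)+bw'(t)+(|\lambda|^\alpha\mu_k^\alpha+m)w(t)=0\ (t>0),\qquad w(0)=a_0,\ w'(0)=a_1.$$ Then, with implicit constants independent of $t,\lambda,k,a_0,a_1$: 1. If $|\lambda|<\frac1{\mu_k}\left[\frac12\left(\frac{b^2}{4}-m\right)\right]^{1/\alpha}$, then $|w(t)|^2\lesssim e^{(-b+\sqrt{b^2-4m-4|\lambda|^\alpha\mu_k^\alpha})t}(|a_0|^2+|a_1|^2)$; and if $|\lambda|>\frac1{\mu_k}\left[\frac12\left(\frac{b^2}{4}-m\right)\right]^{1/\alpha}$, then $|w(t)|^2\lesssim e^{(-b+\sqrt{\frac12(b^2-4m)})t}(|a_0|^2+|a_1|^2)$. 2. If $|\lambda|<\frac1{\mu_k}\left[\frac12\left(\frac{b^2}{4}-m\right)\right]^{1/\alpha}$, then $$|w'(t)|^2\lesssim e^{(-b+\sqrt{b^2-4m-4|\lambda|^\alpha\mu_k^\alpha})t}(|\lambda|^\alpha\mu_k^\alpha+m)^2(|a_0|^2+|a_1|^2)+e^{(-b-\sqrt{b^2-4m-4|\lambda|^\alpha\mu_k^\alpha})t}|a_1|^2;$$ and if $|\lambda|>\frac1{\mu_k}\left[\frac12\left(\frac{b^2}{4}-m\right)\right]^{1/\alpha}$, then $|w'(t)|^2\lesssim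 e^{(-b+\sqrt{\frac12(b^2-4m)})t}\left((|\lambda|^\alpha\mu_k^\alpha+m)|a_0|^2+|a_1|^2\right)$. 3. If $|\lambda|<\frac1{\mu_k}\left[\frac12\left(\frac{b^2}{4}-m\right)\right]^{1/\alpha}$, then $|(|\lambda|\mu_k)^{\alpha/2}w(t)|^2\lesssim e^{(-b+\sqrt{b^2-4m-4|\lambda|^\alpha\mu_k^\alpha})t}(|\lambda|\mu_k)^\alpha(|a_0|^2+|a_1|^2)$; and if $|\lambda|>\frac1{\mu_k}\left[\frac12\left(\frac{b^2}{4}-m\right)\right]^{1/\alpha}$, then $|(|\lambda|\mu_k)^{\alpha/2}w(t)|^2\lesssim e^{(-b+\sqrt{\frac12(b^2-4m)})t}\left(|\lambda|^\alpha\mu_k^\alpha|a_0|^2+|a_1|^2\right)$.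
   Context: In the paper, $w(t)=\widehat{u}(t,\lambda)_{k,\ell}=(\widehat u(t,\lambda)e_k,e_\ell)_{L^2(\mathbb{R}^n)}$ are the Hermite matrix coefficients of the group Fourier transform of a solution of the linear fractional damped wave equation on $\mathbb{H}^n$, with $a_0=\widehat{u}_0(\lambda)_{k,\ell}$, $a_1=\widehat{u}_1(\lambda)_{k,\ell}$; $\mu_k=2|k|+n$ are the eigenvalues of the Hermite operator on $\mathbb{R}^n$. The lemma is a statement about the scalar ODE above. *)

From Stdlib Require Export Reals List.
From Coquelicot Require Export Coquelicot.
Open Scope R_scope.

(* |k| = k_1 + ... + k_n for a multi-index k in N_0^n, represented as a list of length n *)
Definition mindex_abs (k : list nat) : nat := fold_right Nat.add 0%nat k.

(* mu_k = 2|k| + n : eigenvalue of the Hermite operator on R^n *)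
Definition mu (n : nat) (k : list nat) : R := INR (2 * mindex_abs k + n).

Definition thr (b m alpha muk : R) : R :=
  / muk * Rpower ((1/2) * (b ^ 2 / 4 - m)) (1 / alpha).

Definition solves_ode (b c : R) (a0 a1 : Complex.C) (w dw ddw : R -> Complex.C) : Prop :=
  (forall t, 0 <= t -> is_derive w t (dw t)) /\
  (forall t, 0 < t -> is_derive dw t (ddw t)) /\
  (forall t, 0 < t -> (ddw t + RtoC b * dw t + RtoC c * w t)%C = RtoC 0) /\
  w 0 = a0 /\ dw 0 = a1.

(* The real and imaginary parts of [w] solve [p'' + b p' + c p = 0] with
   [c = A + m], [A = (|lambda| mu_k)^alpha].  When [4 A < (b^2 - 4 m) / 2] the
   characteristic roots [(- b +- s) / 2], [s = sqrt (b^2 - 4 c)], are real with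
   gap [s^2 >= (b^2 - 4 m) / 2]; each mode [q - r p] evolves by a single
   exponential, and solving the two modes for [p] and [q] costs only a factor
   uniform in [A].  Otherwise, with [s = sqrt ((b^2 - 4 m) / 2) <= 2 sqrt A],
   the energy [(q + b p / 2)^2 + A p^2] decays at rate [b - s]. *)

From Stdlib Require Import Reals List Lra Psatz ClassicalEpsilon.
From Coquelicot Require Import Coquelicot.
Open Scope R_scope.

Lemma is_lim_seq_diff_quot (f : R -> R) (x l : R) (h : nat -> R) :
  is_derive f x l -> (forall n, h n <> 0) -> is_lim_seq h 0 ->
  is_lim_seq (fun n => (f (x + h n) - f x) / h n) l.
Proof.
  intros Hf Hh0 Hh.
  apply is_derive_Reals in Hf. apply is_lim_seq_spec in Hh. apply is_lim_seq_spec.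
  intros eps. destruct (Hf eps (cond_pos eps)) as [d Hd].
  apply (filter_imp (fun n => Rabs (h n - 0) < d)); [|exact (Hh d)].
  intros n Hn. rewrite Rminus_0_r in Hn. now apply Hd.
Qed.

(* [q] need not be continuous at [0]; the mean value theorem on [[0, h]] still
   produces points [x -> 0+] where [q x] is a difference quotient of [p] at [0]. *)
Lemma derive_cluster_at_0 (p q : R -> R) :
  (forall t, 0 <= t -> is_derive p t (q t)) ->
  forall t, 0 < t -> exists xi : nat -> R,
    (forall n, 0 < xi n < t) /\ is_lim_seq xi 0 /\
    is_lim_seq (fun n => p (xi n)) (p 0) /\ is_lim_seq (fun n => q (xi n)) (q 0).
Proof.
  intros Hp t Ht.
  set (h n := t * (/ 2) ^ S n).
  assert (Hh : forall n, 0 < h n < t).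
  { intro n. unfold h.
    pose proof (pow_lt (/ 2) (S n) ltac:(lra)).
    pose proof (pow_lt_1_compat (/ 2) (S n) ltac:(lra) ltac:(lia)).
    split; [apply Rmult_lt_0_compat | rewrite <- (Rmult_1_r t) at 2; apply Rmult_lt_compat_l];
      lra. }
  assert (Hh0 : is_lim_seq h 0).
  { unfold h. rewrite <- (Rmult_0_r t).
    apply (is_lim_seq_scal_l (fun n => (/ 2) ^ S n) t 0).
    apply (is_lim_seq_incr_1 (fun n => (/ 2) ^ n)), is_lim_seq_geom.
    rewrite Rabs_pos_eq; lra. }
  assert (Hmvt : forall n, exists x, 0 < x < h n /\ q x = (p (0 + h n) - p 0) / h n).
  { intro n. destruct (MVT_cor2 p q 0 (h n)) as [x [Hx Hx0]].
    - apply Hh.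
    - intros x Hx. apply is_derive_Reals, Hp. lra.
    - exists x. split; [lra|]. rewrite Rplus_0_l, Hx. field. specialize (Hh n). lra. }
  destruct (choice _ Hmvt) as [xi Hxi].
  assert (Hxi0 : is_lim_seq xi 0).
  { apply (is_lim_seq_le_le (fun _ => 0) xi h); [|apply is_lim_seq_const|exact Hh0].
    intro n. specialize (Hxi n). lra. }
  exists xi. split; [|split; [exact Hxi0|split]].
  - intro n. specialize (Hxi n). specialize (Hh n). lra.
  - apply is_lim_seq_continuous; [|exact Hxi0].
    apply derivable_continuous_pt. exists (q 0). apply is_derive_Reals, Hp. lra.
  - apply (is_lim_seq_ext (fun n => (p (0 + h n) - p 0) / h n)).
    + intro n. symmetry. apply Hxi.
    + apply is_lim_seq_diff_quot; [apply Hp; lra| |exact Hh0].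
      intro n. specialize (Hh n). lra.
Qed.

Lemma nonincreasing_of_derive_nonpos (G dG : R -> R) :
  (forall t, 0 < t -> is_derive G t (dG t)) -> (forall t, 0 < t -> dG t <= 0) ->
  forall x y, 0 < x -> x <= y -> G y <= G x.
Proof.
  intros HG Hneg x y Hx Hxy.
  destruct (Rle_lt_or_eq_dec _ _ Hxy) as [Hlt | <-]; [|lra].
  destruct (MVT_cor2 G dG x y Hlt) as [z [Hz Hzxy]].
  - intros z Hz. apply is_derive_Reals, HG. lra.
  - assert (dG z <= 0) by (apply Hneg; lra). nra.
Qed.

Definition seq_continuous_at_0_along (p q G : R -> R) : Prop :=
  forall xi, is_lim_seq xi 0 -> is_lim_seq (fun n => p (xi n)) (p 0) ->
    is_lim_seq (fun n => q (xi n)) (q 0) -> is_lim_seq (fun n => G (xi n)) (G 0).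

Lemma le_initial_of_nonincreasing (p q G : R -> R) :
  (forall t, 0 <= t -> is_derive p t (q t)) ->
  (forall x y, 0 < x -> x <= y -> G y <= G x) ->
  seq_continuous_at_0_along p q G ->
  forall t, 0 < t -> G t <= G 0.
Proof.
  intros Hp HG Hlim t Ht.
  destruct (derive_cluster_at_0 p q Hp t Ht) as [xi [Hxi [Hxi0 [Hpxi Hqxi]]]].
  change (Rbar_le (G t) (G 0)).
  apply (is_lim_seq_le (fun _ => G t) (fun n => G (xi n))).
  - intro n. specialize (Hxi n). apply HG; lra.
  - apply is_lim_seq_const.
  - now apply Hlim.
Qed.

Lemma eq_initial_of_derive_0 (p q G : R -> R) :
  (forall t, 0 <= t -> is_derive p t (q t)) ->
  (forall t, 0 < t -> is_derive G t 0) ->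
  seq_continuous_at_0_along p q G ->
  forall t, 0 < t -> G t = G 0.
Proof.
  intros Hp HG Hlim t Ht.
  assert (Hle := le_initial_of_nonincreasing p q G Hp
    (nonincreasing_of_derive_nonpos G (fun _ => 0) HG (fun _ _ => Rle_refl 0)) Hlim t Ht).
  assert (Hge : - G t <= - G 0).
  { apply (le_initial_of_nonincreasing p q (fun x => - G x) Hp);
      [|intros xi Hxi Hpxi Hqxi | exact Ht].
    - apply (nonincreasing_of_derive_nonpos _ (fun _ => - 0)); [|intros; lra].
      intros x Hx. exact (is_derive_opp G x 0 (HG x Hx)).
    - apply -> (is_lim_seq_opp (fun n => G (xi n)) (G 0)). now apply Hlim. }
  lra.
Qed.

Lemma is_lim_seq_exp_scal (k : R) (xi : nat -> R) :
  is_lim_seq xi 0 -> is_lim_seq (fun n => exp (k * xi n)) (exp (k * 0)).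
Proof.
  intro Hxi. apply is_lim_seq_continuous.
  - apply derivable_continuous_pt, derivable_pt_exp.
  - apply is_lim_seq_mult'; [apply is_lim_seq_const | exact Hxi].
Qed.

Lemma is_lim_seq_pow2 (u : nat -> R) (l : R) :
  is_lim_seq u l -> is_lim_seq (fun n => u n ^ 2) (l ^ 2).
Proof.
  intro Hu. apply (is_lim_seq_ext (fun n => u n * u n)); [intro n; ring|].
  replace (l ^ 2) with (l * l) by ring. now apply is_lim_seq_mult'.
Qed.

Ltac solve_is_lim_seq :=
  repeat first
    [ apply is_lim_seq_exp_scal | apply is_lim_seq_minus' | apply is_lim_seq_plus'
    | apply is_lim_seq_pow2 | apply is_lim_seq_mult' | apply is_lim_seq_const | eassumption ].

Lemma sqr_sub_le (x y : R) : (x - y) ^ 2 <= 2 * x ^ 2 + 2 * y ^ 2.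
Proof. pose proof (pow2_ge_0 (x + y)). nra. Qed.

Lemma Rle_div_of_mult (x k E M : R) : 0 < E -> E * x <= k * M -> x <= k / E * M.
Proof.
  intros HE H. apply (Rmult_le_reg_l E); [exact HE|].
  replace (E * (k / E * M)) with (k * M) by (field; lra). exact H.
Qed.

(* The last bound, from [(- b + s) / 2 = - 2 c / (b + s)], yields the factor [c^2]
   in the velocity estimate. *)
Lemma overdamped_roots (b c s : R) :
  0 < b -> 0 < c -> 0 < s -> s ^ 2 = b ^ 2 - 4 * c ->
  (- b + s) / 2 * ((- b - s) / 2) = c /\
  ((- b + s) / 2) ^ 2 <= b ^ 2 /\ ((- b - s) / 2) ^ 2 <= b ^ 2 /\
  ((- b + s) / 2) ^ 2 <= 4 / b ^ 2 * c ^ 2.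
Proof.
  intros Hb Hc Hs Hss.
  assert (Hsb : s < b) by nra.
  assert (Hsqr : forall r, - b <= r <= 0 -> r ^ 2 <= b ^ 2).
  { intros r Hr. pose proof (Rmult_le_pos (r + b) (b - r) ltac:(lra) ltac:(lra)). nra. }
  split; [|split; [apply Hsqr; lra | split; [apply Hsqr; lra |]]].
  - replace ((- b + s) / 2 * ((- b - s) / 2)) with ((b ^ 2 - s ^ 2) / 4) by field.
    rewrite Hss. field.
  - assert (Hrp : (- b + s) / 2 = - 2 * c / (b + s)) by (field_simplify_eq; [nra | lra]).
    rewrite Hrp. unfold Rdiv. rewrite !Rpow_mult_distr, pow_inv.
    assert (Hbs : b ^ 2 <= (b + s) ^ 2) by nra.
    assert (/ (b + s) ^ 2 <= / b ^ 2) by (apply Rinv_le_contravar; nra).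
    pose proof (pow2_ge_0 c). nra.
Qed.

Section OverdampedSolution.

Variables (b c s E p0 q0 X Y : R).
Hypotheses (Hb : 0 < b) (Hc : 0 < c) (Hs : 0 < s) (Hss : s ^ 2 = b ^ 2 - 4 * c)
  (HE : 0 < E <= s ^ 2) (HXY : 0 < Y <= X).

Lemma overdamped_pos_bound (pt : R) :
  s * pt = (q0 - (- b - s) / 2 * p0) * X - (q0 - (- b + s) / 2 * p0) * Y ->
  pt ^ 2 <= (8 + 8 * b ^ 2 + 16 / b ^ 2) / E * (X ^ 2 * p0 ^ 2 + X ^ 2 * q0 ^ 2).
Proof.
  intros Hpt.
  destruct (overdamped_roots b c s Hb Hc Hs Hss) as [_ [Hrp [Hrm _]]].
  assert (Hmode0 : forall r Z, r ^ 2 <= b ^ 2 -> 0 <= Z <= X ->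
                    (q0 - r * p0) ^ 2 * Z ^ 2 <= (2 * q0 ^ 2 + 2 * b ^ 2 * p0 ^ 2) * X ^ 2).
  { intros r Z Hr HZ. pose proof (sqr_sub_le q0 (r * p0)). rewrite Rpow_mult_distr in *.
    pose proof (Rmult_le_compat_r _ _ _ (pow2_ge_0 p0) Hr).
    apply Rmult_le_compat; [apply pow2_ge_0 | apply pow2_ge_0 | lra | apply pow_incr; lra]. }
  assert (Hsp : (s * pt) ^ 2 <= 2 * (q0 - (- b - s) / 2 * p0) ^ 2 * X ^ 2
                                + 2 * (q0 - (- b + s) / 2 * p0) ^ 2 * Y ^ 2).
  { rewrite Hpt.
    pose proof (sqr_sub_le ((q0 - (- b - s) / 2 * p0) * X) ((q0 - (- b + s) / 2 * p0) * Y)).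
    rewrite !Rpow_mult_distr in *. lra. }
  assert (HEp : E * pt ^ 2 <= (s * pt) ^ 2)
    by (rewrite Rpow_mult_distr; apply Rmult_le_compat_r; [apply pow2_ge_0 | apply HE]).
  pose proof (Hmode0 _ X Hrm ltac:(lra)). pose proof (Hmode0 _ Y Hrp ltac:(lra)).
  assert (H16 : 0 <= 16 / b ^ 2) by (apply Rle_mult_inv_pos; nra).
  assert (HXp : 0 <= X ^ 2 * p0 ^ 2) by (apply Rmult_le_pos; apply pow2_ge_0).
  assert (HXq : 0 <= X ^ 2 * q0 ^ 2) by (apply Rmult_le_pos; apply pow2_ge_0).
  pose proof (Rmult_le_pos _ _ H16 (Rplus_le_le_0_compat _ _ HXp HXq)).
  pose proof (Rmult_le_pos _ _ (pow2_ge_0 b) HXq).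
  apply Rle_div_of_mult; [apply HE | nra].
Qed.

Lemma overdamped_vel_bound (qt : R) :
  s * qt = (- b + s) / 2 * (q0 - (- b - s) / 2 * p0) * X
           - (- b - s) / 2 * (q0 - (- b + s) / 2 * p0) * Y ->
  qt ^ 2 <= (8 + 8 * b ^ 2 + 16 / b ^ 2) / E
            * (X ^ 2 * c ^ 2 * p0 ^ 2 + (X ^ 2 * c ^ 2 + Y ^ 2) * q0 ^ 2).
Proof.
  intros Hqt.
  destruct (overdamped_roots b c s Hb Hc Hs Hss) as [Hprod [_ [Hrm Hrpc]]].
  set (rp := (- b + s) / 2) in *. set (rm := (- b - s) / 2) in *.
  replace (rp * (q0 - rm * p0)) with (rp * q0 - c * p0) in Hqt by (rewrite <- Hprod; ring).
  replace (rm * (q0 - rp * p0)) with (rm * q0 - c * p0) in Hqt by (rewrite <- Hprod; ring).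
  assert (Hsq : (s * qt) ^ 2 <= 2 * (rp * q0 - c * p0) ^ 2 * X ^ 2
                               + 2 * (rm * q0 - c * p0) ^ 2 * Y ^ 2).
  { rewrite Hqt. pose proof (sqr_sub_le ((rp * q0 - c * p0) * X) ((rm * q0 - c * p0) * Y)).
    rewrite !Rpow_mult_distr in *. lra. }
  assert (Hu : (rp * q0 - c * p0) ^ 2 <= 8 / b ^ 2 * c ^ 2 * q0 ^ 2 + 2 * c ^ 2 * p0 ^ 2).
  { pose proof (sqr_sub_le (rp * q0) (c * p0)). rewrite !Rpow_mult_distr in *.
    pose proof (Rmult_le_compat_r _ _ _ (pow2_ge_0 q0) Hrpc). unfold Rdiv in *. lra. }
  assert (Hv : (rm * q0 - c * p0) ^ 2 <= 2 * b ^ 2 * q0 ^ 2 + 2 * c ^ 2 * p0 ^ 2).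
  { pose proof (sqr_sub_le (rm * q0) (c * p0)). rewrite !Rpow_mult_distr in *.
    pose proof (Rmult_le_compat_r _ _ _ (pow2_ge_0 q0) Hrm). lra. }
  assert (HEq : E * qt ^ 2 <= (s * qt) ^ 2)
    by (rewrite Rpow_mult_distr; apply Rmult_le_compat_r; [apply pow2_ge_0 | apply HE]).
  pose proof (Rmult_le_compat_r _ _ _ (pow2_ge_0 X) Hu).
  pose proof (Rmult_le_compat_r _ _ _ (pow2_ge_0 Y) Hv).
  assert (HYX : c ^ 2 * p0 ^ 2 * Y ^ 2 <= c ^ 2 * p0 ^ 2 * X ^ 2).
  { apply Rmult_le_compat_l; [apply Rmult_le_pos; apply pow2_ge_0 | apply pow_incr; lra]. }
  apply Rle_div_of_mult; [apply HE|]. unfold Rdiv in *.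
  assert (Hi : 0 <= / b ^ 2) by (apply Rlt_le, Rinv_0_lt_compat; nra).
  pose proof (pow2_ge_0 b).
  assert (HM1 : 0 <= X ^ 2 * c ^ 2 * p0 ^ 2)
    by (apply Rmult_le_pos; [apply Rmult_le_pos|]; apply pow2_ge_0).
  assert (HM2 : 0 <= X ^ 2 * c ^ 2 * q0 ^ 2)
    by (apply Rmult_le_pos; [apply Rmult_le_pos|]; apply pow2_ge_0).
  assert (HM3 : 0 <= Y ^ 2 * q0 ^ 2) by (apply Rmult_le_pos; apply pow2_ge_0).
  nra.
Qed.

End OverdampedSolution.

Lemma exp_sqr (x : R) : exp x ^ 2 = exp (2 * x).
Proof. simpl. rewrite Rmult_1_r, <- exp_plus. f_equal. ring. Qed.

Definition osc_energy (b a x y : R) : R := (y + b / 2 * x) ^ 2 + a * x ^ 2.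

Lemma osc_energy_bounds (b a s x y : R) :
  0 < s -> s ^ 2 <= 4 * a ->
  let k := 2 + 2 * b ^ 2 / s ^ 2 in
  a * x ^ 2 <= osc_energy b a x y /\
  y ^ 2 <= k * osc_energy b a x y /\
  osc_energy b a x y <= k * (a * x ^ 2 + y ^ 2) /\
  osc_energy b a x y <= a * (k * (1 + 4 / s ^ 2)) * (x ^ 2 + y ^ 2).
Proof.
  intros Hs Ha k. unfold osc_energy.
  assert (Hs2 : 0 < s ^ 2) by nra.
  assert (Hbk : b ^ 2 / 2 <= 2 * b ^ 2 / s ^ 2 * a).
  { apply (Rmult_le_reg_r (s ^ 2)); [exact Hs2|].
    replace (2 * b ^ 2 / s ^ 2 * a * s ^ 2) with (2 * b ^ 2 * a) by (field; lra).
    pose proof (pow2_ge_0 b). nra. }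
  assert (H4 : 1 <= 4 / s ^ 2 * a).
  { apply (Rmult_le_reg_r (s ^ 2)); [exact Hs2|].
    replace (4 / s ^ 2 * a * s ^ 2) with (4 * a) by (field; lra). lra. }
  assert (Hk0 : 0 <= 2 * b ^ 2 / s ^ 2) by (apply Rle_mult_inv_pos; [nra | exact Hs2]).
  pose proof (pow2_ge_0 x) as Hx. pose proof (pow2_ge_0 y) as Hy.
  pose proof (pow2_ge_0 (y + b / 2 * x)) as Hyx.
  assert (Hbx : b ^ 2 / 2 * x ^ 2 <= 2 * b ^ 2 / s ^ 2 * a * x ^ 2)
    by (apply Rmult_le_compat_r; assumption).
  assert (Hy2 : y ^ 2 <= 2 * (y + b / 2 * x) ^ 2 + b ^ 2 / 2 * x ^ 2).
  { pose proof (sqr_sub_le (y + b / 2 * x) (b / 2 * x)) as Hsq.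
    replace (y + b / 2 * x - b / 2 * x) with y in Hsq by ring.
    replace ((b / 2 * x) ^ 2) with (b ^ 2 / 4 * x ^ 2) in Hsq by field. lra. }
  assert (HV : (y + b / 2 * x) ^ 2 <= 2 * y ^ 2 + b ^ 2 / 2 * x ^ 2).
  { pose proof (sqr_sub_le y (- (b / 2 * x))) as Hsq.
    replace (y - - (b / 2 * x)) with (y + b / 2 * x) in Hsq by ring.
    replace ((- (b / 2 * x)) ^ 2) with (b ^ 2 / 4 * x ^ 2) in Hsq by field. lra. }
  assert (Hkx : 0 <= 2 * b ^ 2 / s ^ 2 * (y + b / 2 * x) ^ 2) by (apply Rmult_le_pos; assumption).
  assert (Hky : 0 <= 2 * b ^ 2 / s ^ 2 * y ^ 2) by (apply Rmult_le_pos; assumption).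
  assert (HV3 : (y + b / 2 * x) ^ 2 + a * x ^ 2 <= k * (a * x ^ 2 + y ^ 2)) by (unfold k; nra).
  split; [|split; [|split]].
  - lra.
  - unfold k. nra.
  - exact HV3.
  - eapply Rle_trans; [exact HV3|].
    assert (Hk : 0 <= k) by (unfold k; lra).
    assert (Ha0 : 0 <= a) by lra.
    pose proof (Rmult_le_compat_l (k * y ^ 2) _ _ (Rmult_le_pos _ _ Hk Hy) H4).
    pose proof (Rmult_le_pos _ _ (Rmult_le_pos _ _ Ha0 Hk) (Rle_mult_inv_pos 4 _ ltac:(lra) Hs2)).
    pose proof (Rmult_le_pos _ _ (Rmult_le_pos _ _ Ha0 Hk) Hy).
    nra.
Qed.

Definition damped_osc (b c : R) (p q : R -> R) : Prop :=
  (forall t, 0 <= t -> is_derive p t (q t)) /\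
  (forall t, 0 < t -> is_derive q t (- b * q t - c * p t)).

Section DampedOscillator.

Variables (b c : R) (p q : R -> R).
Hypothesis osc : damped_osc b c p q.

Lemma damped_osc_mode (rho sig : R) :
  rho + sig = - b -> rho * sig = c ->
  forall t, 0 < t -> q t - sig * p t = (q 0 - sig * p 0) * exp (rho * t).
Proof.
  destruct osc as [Hp Hq]. intros Hsum Hprod t Ht.
  set (G x := (q x - sig * p x) * exp (- rho * x)).
  assert (HG' : forall x, 0 < x -> is_derive G x 0).
  { intros x Hx. unfold G. auto_derive.
    - assert (ex_derive p x) by (exists (q x); apply Hp; lra).
      assert (ex_derive q x) by (exists (- b * q x - c * p x); now apply Hq).
      repeat split; assumption.
    - rewrite (is_derive_unique _ x (- b * q x - c * p x)) by now apply Hq.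
      rewrite (is_derive_unique _ x (q x)) by (apply Hp; lra).
      replace b with (- (rho + sig)) by lra. rewrite <- Hprod. ring. }
  assert (Hlim : seq_continuous_at_0_along p q G).
  { intros xi Hxi Hpxi Hqxi. unfold G. solve_is_lim_seq. }
  assert (HGt := eq_initial_of_derive_0 p q G Hp HG' Hlim t Ht).
  unfold G in HGt. rewrite Rmult_0_r, exp_0, Rmult_1_r in HGt.
  rewrite <- HGt, Rmult_assoc, <- exp_plus.
  replace (- rho * t + rho * t) with 0 by ring. now rewrite exp_0, Rmult_1_r.
Qed.

(* Lyapunov estimate: with [c = a + (b^2 - 2 s^2) / 4], one has
   [V' + (b - s) V = - s (q + (b - s) / 2 p)^2 - s (a - s^2 / 4) p^2 <= 0]. *)
Lemma damped_osc_energy_decay (a s : R) :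
  0 < s -> s ^ 2 <= 4 * a -> c = a + (b ^ 2 - 2 * s ^ 2) / 4 ->
  forall t, 0 < t ->
  osc_energy b a (p t) (q t) <= osc_energy b a (p 0) (q 0) * exp ((- b + s) * t).
Proof.
  destruct osc as [Hp Hq]. intros Hs Has Hc t Ht.
  set (G x := osc_energy b a (p x) (q x) * exp ((b - s) * x)).
  set (dG x := - s * ((q x + (b - s) / 2 * p x) ^ 2 + (a - s ^ 2 / 4) * p x ^ 2)
                * exp ((b - s) * x)).
  assert (HG' : forall x, 0 < x -> is_derive G x (dG x)).
  { intros x Hx. unfold G, dG, osc_energy. auto_derive.
    - assert (ex_derive p x) by (exists (q x); apply Hp; lra).
      assert (ex_derive q x) by (exists (- b * q x - c * p x); now apply Hq).
      repeat split; assumption.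
    - rewrite (is_derive_unique _ x (- b * q x - c * p x)) by now apply Hq.
      rewrite (is_derive_unique _ x (q x)) by (apply Hp; lra).
      rewrite Hc. match goal with |- ?l = ?r => change (l = r :> R) end. field. }
  assert (HG : forall x y, 0 < x -> x <= y -> G y <= G x).
  { apply (nonincreasing_of_derive_nonpos G dG HG'). intros x Hx. unfold dG.
    assert (HQ : 0 <= (q x + (b - s) / 2 * p x) ^ 2 + (a - s ^ 2 / 4) * p x ^ 2).
    { pose proof (pow2_ge_0 (q x + (b - s) / 2 * p x)). pose proof (pow2_ge_0 (p x)). nra. }
    pose proof (Rmult_le_pos _ _ (Rmult_le_pos _ _ (Rlt_le _ _ Hs) HQ)
                  (Rlt_le _ _ (exp_pos ((b - s) * x)))).
    lra. }
  assert (Hlim : seq_continuous_at_0_along p q G).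
  { intros xi Hxi Hpxi Hqxi. unfold G, osc_energy. solve_is_lim_seq. }
  assert (HGt := le_initial_of_nonincreasing p q G Hp HG Hlim t Ht).
  unfold G in HGt. rewrite Rmult_0_r, exp_0, Rmult_1_r in HGt.
  replace (osc_energy b a (p t) (q t))
    with (osc_energy b a (p t) (q t) * exp ((b - s) * t) * exp ((- b + s) * t)).
  - apply Rmult_le_compat_r; [apply Rlt_le, exp_pos | exact HGt].
  - rewrite Rmult_assoc, <- exp_plus. replace ((b - s) * t + (- b + s) * t) with 0 by ring.
    now rewrite exp_0, Rmult_1_r.
Qed.

Lemma damped_osc_overdamped_bounds (s E : R) :
  0 < b -> 0 < c -> 0 < s -> s ^ 2 = b ^ 2 - 4 * c -> 0 < E <= s ^ 2 ->
  forall t, 0 < t ->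
  p t ^ 2 <= (8 + 8 * b ^ 2 + 16 / b ^ 2) / E
             * (exp ((- b + s) * t) * p 0 ^ 2 + exp ((- b + s) * t) * q 0 ^ 2) /\
  q t ^ 2 <= (8 + 8 * b ^ 2 + 16 / b ^ 2) / E
             * (exp ((- b + s) * t) * c ^ 2 * p 0 ^ 2
                + (exp ((- b + s) * t) * c ^ 2 + exp ((- b - s) * t)) * q 0 ^ 2).
Proof.
  intros Hb Hc Hs Hss HE t Ht.
  destruct (overdamped_roots b c s Hb Hc Hs Hss) as [Hprod _].
  assert (Hu := damped_osc_mode ((- b + s) / 2) ((- b - s) / 2) ltac:(field) Hprod t Ht).
  assert (Hv := damped_osc_mode ((- b - s) / 2) ((- b + s) / 2) ltac:(field)
                  ltac:(rewrite Rmult_comm; exact Hprod) t Ht).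
  set (X := exp ((- b + s) / 2 * t)) in Hu. set (Y := exp ((- b - s) / 2 * t)) in Hv.
  assert (HXY : 0 < Y <= X).
  { split; [apply exp_pos | apply Rlt_le, exp_increasing; nra]. }
  assert (HX : X ^ 2 = exp ((- b + s) * t)) by (unfold X; rewrite exp_sqr; f_equal; field).
  assert (HY : Y ^ 2 = exp ((- b - s) * t)) by (unfold Y; rewrite exp_sqr; f_equal; field).
  rewrite <- HX, <- HY. split.
  - apply (overdamped_pos_bound b c s E (p 0) (q 0) X Y); try assumption.
    rewrite <- Hu, <- Hv. field.
  - apply (overdamped_vel_bound b c s E (p 0) (q 0) X Y); try assumption.
    rewrite !Rmult_assoc, <- Hu, <- Hv. field.
Qed.

Lemma damped_osc_energy_bounds (a s : R) :
  0 < s -> s ^ 2 <= 4 * a -> c = a + (b ^ 2 - 2 * s ^ 2) / 4 ->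
  forall t, 0 < t ->
  let K := (2 + 2 * b ^ 2 / s ^ 2) ^ 2 * (1 + 4 / s ^ 2) in
  let Z := exp ((- b + s) * t) in
  p t ^ 2 <= K * (Z * p 0 ^ 2 + Z * q 0 ^ 2) /\
  q t ^ 2 <= K * (Z * a * p 0 ^ 2 + Z * q 0 ^ 2) /\
  a * p t ^ 2 <= K * (Z * a * p 0 ^ 2 + Z * q 0 ^ 2).
Proof.
  intros Hs Ha Hc t Ht K Z.
  assert (Hdecay := damped_osc_energy_decay a s Hs Ha Hc t Ht). fold Z in Hdecay.
  destruct (osc_energy_bounds b a s (p t) (q t) Hs Ha) as [Hpt [Hqt _]].
  destruct (osc_energy_bounds b a s (p 0) (q 0) Hs Ha) as [_ [_ [HV0 HV0']]].
  set (k := 2 + 2 * b ^ 2 / s ^ 2) in *.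
  set (Vt := osc_energy b a (p t) (q t)) in *. set (V0 := osc_energy b a (p 0) (q 0)) in *.
  assert (Hs2 : 0 < s ^ 2) by nra.
  assert (H4s : 0 <= 4 / s ^ 2) by (apply Rle_mult_inv_pos; lra).
  assert (Hk : 2 <= k)
    by (unfold k; pose proof (Rle_mult_inv_pos (2 * b ^ 2) _ ltac:(nra) Hs2); lra).
  assert (HZ : 0 < Z) by apply exp_pos.
  assert (HK1 : k <= K) by (unfold K; nra).
  assert (HK2 : k * k <= K) by (unfold K; nra).
  assert (HK3 : k * (1 + 4 / s ^ 2) <= K) by (unfold K; apply Rmult_le_compat_r; nra).
  pose proof (pow2_ge_0 (p 0)). pose proof (pow2_ge_0 (q 0)).
  assert (HM : 0 <= a * p 0 ^ 2 + q 0 ^ 2) by nra.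
  assert (HN : 0 <= p 0 ^ 2 + q 0 ^ 2) by lra.
  assert (HVZ : Vt <= k * (a * p 0 ^ 2 + q 0 ^ 2) * Z).
  { eapply Rle_trans; [exact Hdecay|]. apply Rmult_le_compat_r; lra. }
  split; [|split].
  - assert (Ha0 : 0 < a) by lra.
    apply (Rmult_le_reg_l a); [exact Ha0|].
    assert (a * p t ^ 2 <= a * (k * (1 + 4 / s ^ 2)) * (p 0 ^ 2 + q 0 ^ 2) * Z).
    { eapply Rle_trans; [exact Hpt|]. eapply Rle_trans; [exact Hdecay|].
      apply Rmult_le_compat_r; lra. }
    pose proof (Rmult_le_compat_r (a * ((p 0 ^ 2 + q 0 ^ 2) * Z)) _ _
                  (Rmult_le_pos _ _ (Rlt_le _ _ Ha0) (Rmult_le_pos _ _ HN (Rlt_le _ _ HZ))) HK3).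
    lra.
  - pose proof (Rmult_le_compat_l k _ _ ltac:(lra) HVZ).
    pose proof (Rmult_le_compat_r ((a * p 0 ^ 2 + q 0 ^ 2) * Z) _ _
                  (Rmult_le_pos _ _ HM (Rlt_le _ _ HZ)) HK2).
    lra.
  - pose proof (Rmult_le_compat_r ((a * p 0 ^ 2 + q 0 ^ 2) * Z) _ _
                  (Rmult_le_pos _ _ HM (Rlt_le _ _ HZ)) HK1).
    lra.
Qed.
End DampedOscillator.

Lemma is_derive_linear_comp {V W : NormedModule R_AbsRing} (L : V -> W) (f : R -> V)
  (t : R) (l : V) :
  is_linear L -> is_derive f t l -> is_derive (fun s => L (f s)) t (L l).
Proof.
  intros HL Hf.
  apply filterdiff_ext_lin with (fun y => L (scal y l)).
  - apply (filterdiff_comp' f L t _ _ Hf). now apply filterdiff_linear.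
  - intro y. now apply linear_scal.
Qed.

Lemma solves_ode_re_im (b c : R) (a0 a1 : C) (w dw ddw : R -> C) :
  solves_ode b c a0 a1 w dw ddw ->
  damped_osc b c (fun t => Re (w t)) (fun t => Re (dw t)) /\
  damped_osc b c (fun t => Im (w t)) (fun t => Im (dw t)).
Proof.
  intros [Hw [Hdw [Hode _]]].
  assert (HRe : is_linear (U := C_R_NormedModule) (V := R_NormedModule) Re)
    by apply (is_linear_fst (U := R_NormedModule) (V := R_NormedModule)).
  assert (HIm : is_linear (U := C_R_NormedModule) (V := R_NormedModule) Im)
    by apply (is_linear_snd (U := R_NormedModule) (V := R_NormedModule)).
  split; split; intros t Ht.
  - apply (is_derive_linear_comp Re w t _ HRe). now apply Hw.
  - replace (- b * Re (dw t) - c * Re (w t)) with (Re (ddw t)).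
    + apply (is_derive_linear_comp Re dw t _ HRe). now apply Hdw.
    + specialize (Hode t Ht). apply (f_equal Re) in Hode. simpl in Hode. unfold Re. lra.
  - apply (is_derive_linear_comp Im w t _ HIm). now apply Hw.
  - replace (- b * Im (dw t) - c * Im (w t)) with (Im (ddw t)).
    + apply (is_derive_linear_comp Im dw t _ HIm). now apply Hdw.
    + specialize (Hode t Ht). apply (f_equal Im) in Hode. simpl in Hode. unfold Im. lra.
Qed.

Lemma Cmod_sqr (z : C) : Cmod z ^ 2 = Re z ^ 2 + Im z ^ 2.
Proof.
  unfold Cmod, Re, Im. rewrite pow2_sqrt; [reflexivity|].
  pose proof (pow2_ge_0 (fst z)). pose proof (pow2_ge_0 (snd z)). lra.
Qed.

Lemma scal_Cmod_sqr_le_of_parts (z a0 a1 : C) (g K x y : R) :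
  g * Re z ^ 2 <= K * (x * Re a0 ^ 2 + y * Re a1 ^ 2) ->
  g * Im z ^ 2 <= K * (x * Im a0 ^ 2 + y * Im a1 ^ 2) ->
  g * Cmod z ^ 2 <= K * (x * Cmod a0 ^ 2 + y * Cmod a1 ^ 2).
Proof. rewrite !Cmod_sqr. lra. Qed.

Lemma Cmod_sqr_le_of_parts (z a0 a1 : C) (K x y : R) :
  Re z ^ 2 <= K * (x * Re a0 ^ 2 + y * Re a1 ^ 2) ->
  Im z ^ 2 <= K * (x * Im a0 ^ 2 + y * Im a1 ^ 2) ->
  Cmod z ^ 2 <= K * (x * Cmod a0 ^ 2 + y * Cmod a1 ^ 2).
Proof.
  intros Hre Him. rewrite <- (Rmult_1_l (Cmod z ^ 2)).
  apply scal_Cmod_sqr_le_of_parts; rewrite Rmult_1_l; assumption.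
Qed.

Lemma Rmult_le_weaken (x K' K y z : R) :
  x <= K' * y -> 0 <= K' <= K -> 0 <= y <= z -> x <= K * z.
Proof.
  intros Hx [HK' HK] [Hy Hyz]. pose proof (Rmult_le_compat _ _ _ _ HK' Hy HK Hyz). lra.
Qed.

(* [E = (b^2 - 4 m) / 2]; the two summands serve the two frequency regimes. *)
Definition decay_const (b E : R) : R :=
  (8 + 8 * b ^ 2 + 16 / b ^ 2) / E + (2 + 2 * b ^ 2 / E) ^ 2 * (1 + 4 / E).

Lemma decay_const_bounds (b E : R) : 0 < b -> 0 < E ->
  0 < decay_const b E /\
  0 <= (8 + 8 * b ^ 2 + 16 / b ^ 2) / E <= decay_const b E /\
  0 <= (2 + 2 * b ^ 2 / E) ^ 2 * (1 + 4 / E) <= decay_const b E.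
Proof.
  intros Hb HE. unfold decay_const.
  assert (Hb2 : 0 < b ^ 2) by nra.
  assert (H1 : 0 < (8 + 8 * b ^ 2 + 16 / b ^ 2) / E).
  { apply Rdiv_lt_0_compat; [|exact HE].
    pose proof (Rle_mult_inv_pos 16 _ ltac:(lra) Hb2). lra. }
  assert (H2 : 0 <= (2 + 2 * b ^ 2 / E) ^ 2 * (1 + 4 / E)).
  { apply Rmult_le_pos; [apply pow2_ge_0|].
    pose proof (Rle_mult_inv_pos 4 _ ltac:(lra) HE). lra. }
  lra.
Qed.

Lemma solves_ode_small_frequency (b m A : R) (a0 a1 : C) (w dw ddw : R -> C) (t : R) :
  0 < b -> 0 <= m -> 0 < A -> 4 * A < (b ^ 2 - 4 * m) / 2 ->
  solves_ode b (A + m) a0 a1 w dw ddw -> 0 < t ->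
  let s := sqrt (b ^ 2 - 4 * m - 4 * A) in
  let K := decay_const b ((b ^ 2 - 4 * m) / 2) in
  let N := Cmod a0 ^ 2 + Cmod a1 ^ 2 in
  Cmod (w t) ^ 2 <= K * (exp ((- b + s) * t) * N) /\
  Cmod (dw t) ^ 2 <= K * (exp ((- b + s) * t) * (A + m) ^ 2 * N
                          + exp ((- b - s) * t) * Cmod a1 ^ 2) /\
  A * Cmod (w t) ^ 2 <= K * (exp ((- b + s) * t) * A * N).
Proof.
  intros Hb Hm HA HAE Hsol Ht s K N.
  assert (Hss : s ^ 2 = b ^ 2 - 4 * (A + m)) by (unfold s; rewrite pow2_sqrt; lra).
  assert (Hs : 0 < s) by (apply sqrt_lt_R0; lra).
  assert (HE : 0 < (b ^ 2 - 4 * m) / 2 <= s ^ 2) by lra.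
  set (E := (b ^ 2 - 4 * m) / 2) in *.
  destruct (solves_ode_re_im _ _ _ _ _ _ _ Hsol) as [Hre Him].
  destruct Hsol as [_ [_ [_ [Hw0 Hdw0]]]].
  destruct (damped_osc_overdamped_bounds _ _ _ _ Hre s E Hb ltac:(lra) Hs Hss HE t Ht)
    as [Hp1 Hq1].
  destruct (damped_osc_overdamped_bounds _ _ _ _ Him s E Hb ltac:(lra) Hs Hss HE t Ht)
    as [Hp2 Hq2].
  cbv beta in Hp1, Hq1, Hp2, Hq2. rewrite Hw0, Hdw0 in Hp1, Hq1, Hp2, Hq2.
  pose proof (Cmod_sqr_le_of_parts _ _ _ _ _ _ Hp1 Hp2) as Hw.
  pose proof (Cmod_sqr_le_of_parts _ _ _ _ _ _ Hq1 Hq2) as Hdw.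
  destruct (decay_const_bounds b E Hb (proj1 HE)) as [_ [HK _]]. fold K in HK.
  set (K1 := (8 + 8 * b ^ 2 + 16 / b ^ 2) / E) in *.
  set (ep := exp ((- b + s) * t)) in *. set (em := exp ((- b - s) * t)) in *.
  assert (Hep : 0 < ep) by apply exp_pos. assert (Hem : 0 < em) by apply exp_pos.
  pose proof (pow2_ge_0 (Cmod a0)). pose proof (pow2_ge_0 (Cmod a1)).
  pose proof (pow2_ge_0 (A + m)).
  split; [|split].
  - apply (Rmult_le_weaken _ _ _ _ _ Hw HK). split; [nra | right; unfold N; ring].
  - assert (0 <= ep * (A + m) ^ 2) by (apply Rmult_le_pos; lra).
    apply (Rmult_le_weaken _ _ _ _ _ Hdw HK). split; [nra | right; unfold N; ring].
  - apply (Rmult_le_weaken _ K1 _ (A * (ep * Cmod a0 ^ 2 + ep * Cmod a1 ^ 2))); [|exact HK|].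
    + pose proof (Rmult_le_compat_l A _ _ (Rlt_le _ _ HA) Hw). lra.
    + split; [apply Rmult_le_pos; nra | right; unfold N; ring].
Qed.

Lemma solves_ode_large_frequency (b m A : R) (a0 a1 : C) (w dw ddw : R -> C) (t : R) :
  0 < b -> 0 <= m -> 4 * m < b ^ 2 -> (b ^ 2 - 4 * m) / 2 < 4 * A ->
  solves_ode b (A + m) a0 a1 w dw ddw -> 0 < t ->
  let s := sqrt ((1 / 2) * (b ^ 2 - 4 * m)) in
  let K := decay_const b ((b ^ 2 - 4 * m) / 2) in
  Cmod (w t) ^ 2 <= K * (exp ((- b + s) * t) * (Cmod a0 ^ 2 + Cmod a1 ^ 2)) /\
  Cmod (dw t) ^ 2 <= K * (exp ((- b + s) * t) * ((A + m) * Cmod a0 ^ 2 + Cmod a1 ^ 2)) /\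
  A * Cmod (w t) ^ 2 <= K * (exp ((- b + s) * t) * (A * Cmod a0 ^ 2 + Cmod a1 ^ 2)).
Proof.
  intros Hb Hm Hbm HAE Hsol Ht s K.
  assert (Hss : s ^ 2 = (b ^ 2 - 4 * m) / 2) by (unfold s; rewrite pow2_sqrt; lra).
  assert (Hs : 0 < s) by (apply sqrt_lt_R0; lra).
  assert (HsA : s ^ 2 <= 4 * A) by lra.
  assert (Hc : A + m = A + (b ^ 2 - 2 * s ^ 2) / 4) by lra.
  destruct (solves_ode_re_im _ _ _ _ _ _ _ Hsol) as [Hre Him].
  destruct Hsol as [_ [_ [_ [Hw0 Hdw0]]]].
  destruct (damped_osc_energy_bounds _ _ _ _ Hre A s Hs HsA Hc t Ht) as [Hp1 [Hq1 HAp1]].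
  destruct (damped_osc_energy_bounds _ _ _ _ Him A s Hs HsA Hc t Ht) as [Hp2 [Hq2 HAp2]].
  cbv beta zeta in Hp1, Hq1, HAp1, Hp2, Hq2, HAp2.
  rewrite Hw0, Hdw0, Hss in Hp1, Hq1, HAp1, Hp2, Hq2, HAp2.
  pose proof (Cmod_sqr_le_of_parts _ _ _ _ _ _ Hp1 Hp2) as Hw.
  pose proof (Cmod_sqr_le_of_parts _ _ _ _ _ _ Hq1 Hq2) as Hdw.
  pose proof (scal_Cmod_sqr_le_of_parts _ _ _ _ _ _ _ HAp1 HAp2) as HAw.
  destruct (decay_const_bounds b ((b ^ 2 - 4 * m) / 2) Hb ltac:(lra)) as [_ [_ HK]]. fold K in HK.
  set (Z := exp ((- b + s) * t)) in *.
  assert (HZ : 0 < Z) by apply exp_pos.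
  pose proof (pow2_ge_0 (Cmod a0)). pose proof (pow2_ge_0 (Cmod a1)).
  assert (HZA : 0 <= Z * A) by (apply Rmult_le_pos; lra).
  split; [|split].
  - apply (Rmult_le_weaken _ _ _ _ _ Hw HK). split; [nra | right; ring].
  - apply (Rmult_le_weaken _ _ _ _ _ Hdw HK). split; [nra|].
    assert (0 <= Z * m * Cmod a0 ^ 2) by (apply Rmult_le_pos; [apply Rmult_le_pos|]; lra).
    nra.
  - apply (Rmult_le_weaken _ _ _ _ _ HAw HK). split; [nra | right; ring].
Qed.

Lemma Rpower_root (c alpha : R) : 0 < c -> 0 < alpha -> Rpower (Rpower c (1 / alpha)) alpha = c.
Proof.
  intros Hc Ha. rewrite Rpower_mult.
  replace (1 / alpha * alpha) with 1 by (field; lra). now apply Rpower_1.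
Qed.

Lemma Rpower_mult_lt_of_lt_root (x mu alpha c : R) :
  0 < x -> 0 < mu -> 0 < alpha -> 0 < c ->
  x < / mu * Rpower c (1 / alpha) -> Rpower x alpha * Rpower mu alpha < c.
Proof.
  intros Hx Hmu Ha Hc Hlt.
  rewrite Rpower_mult_distr, <- (Rpower_root c alpha) by assumption.
  apply Rlt_Rpower_l; [exact Ha|]. split; [nra|].
  apply (Rmult_lt_compat_r mu) in Hlt; [|exact Hmu].
  replace (/ mu * Rpower c (1 / alpha) * mu) with (Rpower c (1 / alpha)) in Hlt by (field; lra).
  exact Hlt.
Qed.

Lemma Rpower_mult_gt_of_gt_root (x mu alpha c : R) :
  0 < x -> 0 < mu -> 0 < alpha -> 0 < c ->
  / mu * Rpower c (1 / alpha) < x -> c < Rpower x alpha * Rpower mu alpha.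
Proof.
  intros Hx Hmu Ha Hc Hlt.
  rewrite Rpower_mult_distr, <- (Rpower_root c alpha) at 1 by assumption.
  apply Rlt_Rpower_l; [exact Ha|]. split; [apply exp_pos|].
  apply (Rmult_lt_compat_r mu) in Hlt; [|exact Hmu].
  replace (/ mu * Rpower c (1 / alpha) * mu) with (Rpower c (1 / alpha)) in Hlt by (field; lra).
  exact Hlt.
Qed.

Theorem lemma3p1 :
  forall (n : nat), (1 <= n)%nat ->
  forall (b m alpha : R), 0 < b -> 0 <= m -> b ^ 2 > 4 * m -> 0 < alpha ->
  exists K : R, 0 < K /\
  forall (lambda : R) (k : list nat) (a0 a1 : Complex.C) (w dw ddw : R -> Complex.C),
    lambda <> 0 -> length k = n ->
    let muk := mu n k in
    let A := Rpower (Rabs lambda) alpha * Rpower muk alpha in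
    solves_ode b (A + m) a0 a1 w dw ddw ->
    let N := Cmod a0 ^ 2 + Cmod a1 ^ 2 in
    forall t : R, 0 < t ->
    (Rabs lambda < thr b m alpha muk ->
       Cmod (w t) ^ 2 <= K * (exp ((- b + sqrt (b ^ 2 - 4 * m - 4 * A)) * t) * N)
       /\ Cmod (dw t) ^ 2 <=
            K * (exp ((- b + sqrt (b ^ 2 - 4 * m - 4 * A)) * t) * (A + m) ^ 2 * N
                 + exp ((- b - sqrt (b ^ 2 - 4 * m - 4 * A)) * t) * Cmod a1 ^ 2)
       /\ (Rpower (Rabs lambda * muk) (alpha / 2) * Cmod (w t)) ^ 2 <=
            K * (exp ((- b + sqrt (b ^ 2 - 4 * m - 4 * A)) * t)
                 * Rpower (Rabs lambda * muk) alpha * N)) /\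
    (Rabs lambda > thr b m alpha muk ->
       Cmod (w t) ^ 2 <= K * (exp ((- b + sqrt ((1/2) * (b ^ 2 - 4 * m))) * t) * N)
       /\ Cmod (dw t) ^ 2 <=
            K * (exp ((- b + sqrt ((1/2) * (b ^ 2 - 4 * m))) * t)
                 * ((A + m) * Cmod a0 ^ 2 + Cmod a1 ^ 2))
       /\ (Rpower (Rabs lambda * muk) (alpha / 2) * Cmod (w t)) ^ 2 <=
            K * (exp ((- b + sqrt ((1/2) * (b ^ 2 - 4 * m))) * t)
                 * (A * Cmod a0 ^ 2 + Cmod a1 ^ 2))).
Proof.
  intros n Hn b m alpha Hb Hm Hbm Halpha.
  exists (decay_const b ((b ^ 2 - 4 * m) / 2)).
  split; [apply decay_const_bounds; lra|].
  intros lambda k a0 a1 w dw ddw Hl Hk muk A Hsol N t Ht.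
  assert (Hmu : 0 < muk) by (unfold muk, mu; apply lt_0_INR; lia).
  assert (Hx : 0 < Rabs lambda) by now apply Rabs_pos_lt.
  assert (HA : Rpower (Rabs lambda * muk) alpha = A) by now apply eq_sym, Rpower_mult_distr.
  assert (Hsq : forall y, (Rpower (Rabs lambda * muk) (alpha / 2) * y) ^ 2 = A * y ^ 2).
  { intro y. rewrite Rpow_mult_distr, <- HA. simpl. rewrite Rmult_1_r, <- Rpower_plus.
    f_equal. f_equal. field. }
  rewrite HA, !Hsq. unfold thr.
  assert (Hc : 0 < 1 / 2 * (b ^ 2 / 4 - m)) by lra.
  split; intro Hthr.
  - apply (solves_ode_small_frequency b m A a0 a1 w dw ddw); try assumption.
    + apply Rmult_lt_0_compat; apply exp_pos.
    + pose proof (Rpower_mult_lt_of_lt_root _ _ _ _ Hx Hmu Halpha Hc Hthr). fold A in H. lra.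
  - apply (solves_ode_large_frequency b m A a0 a1 w dw ddw); try assumption; try lra.
    pose proof (Rpower_mult_gt_of_gt_root _ _ _ _ Hx Hmu Halpha Hc Hthr). fold A in H. lra.
Qed.
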